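(* Let $\mathcal{K}$ be a simplicial complex of dimension at most $2$ with non-negatively weighted edges, let $g=\operatorname{rank}\mathsf{H}_1(\mathcal{K})$ and $L=\operatorname{rank}\mathsf{Z}_1(\mathcal{K})$. Let $\mathcal{G}'$ be a set of $1$-cycles such that there exists a minimal cycle basis $\Gamma^*=\{\gamma^*_1,\dots,\gamma^*_L\}$ of the $1$-skeleton of $\mathcal{K}$ with the property that for each $1\le i\le L$ there is a subset $\Gamma_i\subseteq\mathcal{G}'$ with $\gamma^*_i=\sum_{\gamma\in\Gamma_i}\gamma$ and $\mathcal{S}(\gamma)\le 2\mathcal{S}(\gamma^*_i)$ for every $\gamma\in\Gamma_i$. Then there exists a minimal homology basis $\mathcal{C}^*=\{C^*_1,\dots,C^*_g\}$ of $\mathsf{H}_1(\mathcal{K})$ such that $\mathcal{G}'$ contains $g$ cycles $A_1,\dots,A_g$ with (i) $[A_1],\dots,[A_g]$ forming a homology basis, and (ii) $\mathcal{S}(A_i)\le 2\mathcal{S}(C^*_i)$ for $i=1,\dots,g$.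
   Context: All chains, cycles and homology are over $\mathbb{Z}_2$; sums of cycles are $\mathbb{Z}_2$-sums of edge sets. The size $\mathcal{S}(C)$ of a $1$-cycle is the total weight of its edges. A cycle basis of the $1$-skeleton is a set of $L$ cycles forming a basis of the cycle space $\mathsf{Z}_1$; it is minimal if its total size is smallest among all cycle bases. A homology basis is a set of $g$ cycles whose classes form a basis of $\mathsf{H}_1(\mathcal{K})$; it is minimal if its total size is smallest among all homology bases. *)

From HB Require Import structures.
From mathcomp Require Import all_boot all_order all_algebra.
Set Implicit Arguments. Unset Strict Implicit. Unset Printing Implicit Defensive.
Import Order.TTheory GRing.Theory Num.Theory.
Local Open Scope ring_scope.

(* A simplicial complex of dimension <= 2 on the finite vertex type V:
   edges are 2-element vertex sets, triangles 3-element vertex sets, and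
   every 2-element subset of a triangle is an edge (closure under faces;
   all vertices of V are 0-simplices). *)
Record complex2 (V : finType) := Complex2 {
  edges : {set {set V}};
  tris  : {set {set V}};
  edges_card : forall e, e \in edges -> #|e| = 2%N;
  tris_card  : forall t, t \in tris -> #|t| = 3%N;
  tris_faces : forall t e : {set V}, t \in tris -> e \subset t -> #|e| = 2%N -> e \in edges
}.

(* 1-chains over Z_2 = sets of edges; 2-chains = sets of triangles. *)
Definition chain (V : finType) := {set {set V}}.

Definition zsum (V I : finType) (f : I -> chain V) (S : {set I}) : chain V :=
  [set e | odd #|[set i in S | e \in f i]|].

Definition zsumset (V : finType) (G : {set chain V}) : chain V :=
  [set e | odd #|[set c in G | e \in c]|].

Definition cadd (V : finType) (a b : chain V) : chain V := (a :\: b) :|: (b :\: a).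

Definition is_cycle (V : finType) (K : complex2 V) (c : chain V) : Prop :=
  c \subset edges K /\ forall v : V, ~~ odd #|[set e in c | v \in e]|.

Definition bd2 (V : finType) (K : complex2 V) (T : chain V) : chain V :=
  [set e in edges K | odd #|[set t in T | e \subset t]|].

Definition is_boundary (V : finType) (K : complex2 V) (c : chain V) : Prop :=
  exists T : chain V, T \subset tris K /\ c = bd2 K T.

Definition csize (R : realFieldType) (V : finType) (w : {set V} -> R)
  (c : chain V) : R := \sum_(e in c) w e.

Definition total_size (R : realFieldType) (V : finType) (w : {set V} -> R)
  (n : nat) (f : 'I_n -> chain V) : R := \sum_(i < n) csize w (f i).

Definition cycle_basis (V : finType) (K : complex2 V) (n : nat)
  (f : 'I_n -> chain V) : Prop :=
  [/\ forall i, is_cycle K (f i),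
      forall S : {set 'I_n}, zsum f S = set0 -> S = set0 &
      forall z, is_cycle K z -> exists S : {set 'I_n}, z = zsum f S].

Definition min_cycle_basis (R : realFieldType) (V : finType) (K : complex2 V)
  (w : {set V} -> R) (n : nat) (f : 'I_n -> chain V) : Prop :=
  cycle_basis K f /\
  forall (m : nat) (f' : 'I_m -> chain V), cycle_basis K f' ->
    total_size w f <= total_size w f'.

Definition homology_basis (V : finType) (K : complex2 V) (n : nat)
  (f : 'I_n -> chain V) : Prop :=
  [/\ forall i, is_cycle K (f i),
      forall S : {set 'I_n}, is_boundary K (zsum f S) -> S = set0 &
      forall z, is_cycle K z -> exists S : {set 'I_n}, exists b,
        is_boundary K b /\ z = cadd (zsum f S) b].

Definition min_homology_basis (R : realFieldType) (V : finType) (K : complex2 V)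
  (w : {set V} -> R) (n : nat) (f : 'I_n -> chain V) : Prop :=
  homology_basis K f /\
  forall (m : nat) (f' : 'I_m -> chain V), homology_basis K f' ->
    total_size w f <= total_size w f'.

(* Identify 1-chains with vectors over F_2.  Replacing a member of a minimal
   cycle basis by a cycle in whose expansion it occurs yields another cycle
   basis, so a cycle of size s lies in the span of the basis cycles of size at
   most s, hence in the span of the members of G' of size at most 2 s.
   Now take a minimal homology basis C.  For every j, all C_i with
   S(C_i) <= S(C_j) lie in the span of the members of G' of size at most
   2 S(C_j); removing an index of largest size and counting dimensions modulo
   boundaries, induction on the set of indices picks for each C_j such a
   member A_j with the A_j independent modulo boundaries.  As there are
   g = dim H_1 of them, the A_j form a homology basis. *)

From mathcomp Require Import all_boot all_order all_algebra zify.
Set Implicit Arguments. Unset Strict Implicit. Unset Printing Implicit Defensive.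
Import Order.TTheory GRing.Theory Num.Theory.
Local Open Scope ring_scope.

Section FreeModulo.
Variable F : fieldType.

Definition spanmx (I : finType) n (v : I -> 'rV[F]_n) (S : {set I}) : 'M[F]_n :=
  (\sum_(i in S) <<v i>>)%MS.

Definition free_mod (I : finType) p n (B : 'M[F]_(p, n)) (v : I -> 'rV[F]_n)
    (S : {set I}) : bool :=
  \rank (spanmx v S + B)%MS == (#|S| + \rank B)%N.

Variables (I : finType) (n : nat).
Implicit Types (v : I -> 'rV[F]_n) (S T : {set I}).

Lemma mem_spanmx v S i : i \in S -> (v i <= spanmx v S)%MS.
Proof. by move=> iS; apply: (sumsmx_sup i) => //; rewrite genmxE. Qed.

Lemma spanmxS v S T : S \subset T -> (spanmx v S <= spanmx v T)%MS.
Proof.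
move=> sST; apply/sumsmx_subP => i iS; rewrite genmxE.
by apply: mem_spanmx; apply: (subsetP sST).
Qed.

Lemma sum_sub_spanmx v S : ((\sum_(i in S) v i)%R <= spanmx v S)%MS.
Proof. by apply: summx_sub => i; apply: mem_spanmx. Qed.

Lemma spanmx_exchange v S j : j \in S ->
  (spanmx (fun i => if i == j then (\sum_(k in S) v k)%R else v i) setT
     :=: spanmx v setT)%MS.
Proof.
set v' := fun i => _; move=> jS; apply/eqmxP/andP; split.
  apply/sumsmx_subP => i _; rewrite genmxE /v'; case: eqP => _.
    exact: submx_trans (sum_sub_spanmx v S) (spanmxS v (subsetT S)).
  exact: mem_spanmx.
apply/sumsmx_subP => i _; rewrite genmxE; case: (eqVneq i j) => [->|neq_ij].
  have -> : v j = (v' j - \sum_(k in S :\ j) v' k)%R.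
    rewrite {1}/v' eqxx (big_setD1 j jS) /=.
    rewrite [X in _ - X](eq_bigr v) ?addrK // => k.
    by rewrite in_setD1 /v' => /andP[/negPf -> _].
  apply: addmx_sub; first exact: mem_spanmx.
  rewrite eqmx_opp; exact: submx_trans (sum_sub_spanmx v' _) (spanmxS v' (subsetT _)).
have <- : v' i = v i by rewrite /v' (negPf neq_ij).
exact: mem_spanmx.
Qed.

Lemma spanmxD1 v S j : j \in S -> (spanmx v S :=: <<v j>> + spanmx v (S :\ j))%MS.
Proof. by move=> jS; rewrite /spanmx (big_setD1 j jS). Qed.

Lemma mxrank_spanmx_le v S : (\rank (spanmx v S) <= #|S|)%N.
Proof.
rewrite -sum1_card /spanmx.
elim/big_rec2: _ => [|i k A _ leAk]; first by rewrite mxrank0.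
apply: leq_trans (mxrank_adds_leqif _ _) _.
by rewrite mxrank_gen leq_add ?rank_leq_row.
Qed.

Lemma mxrank_adds_genmx p (A : 'M[F]_(p, n)) (x : 'rV[F]_n) :
  ~~ (x <= A)%MS -> \rank (<<x>> + A)%MS = (\rank A).+1.
Proof.
move=> xA; have x0 : x != 0 by apply: contraNneq xA => ->; rewrite sub0mx.
have cap0 : (<<x>> :&: A)%MS = 0.
  apply/eqP; rewrite -submx0; apply/rV_subP => y.
  rewrite sub_capmx genmxE => /andP[/sub_rVP[a ->] yA].
  case: (eqVneq a 0) => [->|a0]; first by rewrite scale0r sub0mx.
  by case/negP: xA; rewrite -(scalerK a0 x) scalemx_sub.
by have := mxrank_sum_cap <<x>>%MS A; rewrite cap0 mxrank0 mxrank_gen rank_rV x0 addn0.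
Qed.

Lemma mxrank_spanmx_adds_le p (B : 'M[F]_(p, n)) v S :
  (\rank (spanmx v S + B) <= #|S| + \rank B)%N.
Proof.
by apply: leq_trans (mxrank_adds_leqif _ _) _; rewrite leq_add2r mxrank_spanmx_le.
Qed.

Lemma free_modS p (B : 'M[F]_(p, n)) v S T :
  T \subset S -> free_mod B v S -> free_mod B v T.
Proof.
move=> sTS /eqP rkS; rewrite /free_mod eqn_leq mxrank_spanmx_adds_le /=.
have: (spanmx v S + B <= spanmx v (S :\: T) + (spanmx v T + B))%MS.
  have -> : spanmx v S = (spanmx v T + spanmx v (S :\: T))%MS.
    by rewrite /spanmx (big_setID T) (setIidPr sTS).
  by rewrite (addsmxC (spanmx v T)) -addsmxA.
move/mxrankS; rewrite rkS -(cardsID T S) (setIidPr sTS) => leS.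
have := leq_trans leS (mxrank_spanmx_adds_le _ _ _); lia.
Qed.

Lemma free_modD1 p (B : 'M[F]_(p, n)) v S j : j \in S ->
  free_mod B v S = free_mod B v (S :\ j) && ~~ (v j <= spanmx v (S :\ j) + B)%MS.
Proof.
move=> jS; rewrite /free_mod (adds_eqmx (spanmxD1 v jS) (eqmx_refl B)) -addsmxA.
rewrite (cardsD1 j S) jS; have [vjS|vjS] := boolP (v j <= spanmx v (S :\ j) + B)%MS.
  rewrite andbF (addsmx_idPr (_ : <<v j>> <= _)%MS) ?genmxE //=.
  have := mxrank_spanmx_adds_le B v (S :\ j); lia.
by rewrite mxrank_adds_genmx // andbT.
Qed.

Section Greedy.
Variables (d : Order.disp_t) (Wt : orderType d) (J : finType) (p : nat).
Variables (B : 'M[F]_(p, n)) (c : I -> 'rV[F]_n) (v : J -> 'rV[F]_n).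
(* [x0] only fills the choice function outside the set of indices. *)
Variables (adm : I -> pred J) (wt : I -> Wt) (x0 : J).
Hypothesis adm_span :
  forall i j, (wt i <= wt j)%O -> (c i <= spanmx v [set x | adm j x] + B)%MS.

Lemma greedy_free_mod S : free_mod B c S ->
  exists a : I -> J, (forall i, i \in S -> adm i (a i)) /\ free_mod B (v \o a) S.
Proof.
have [k] := ubnP #|S|; elim: k S => // k IHk S ltSk freeS.
have [->|[m0 m0S]] := set_0Vmem S.
  exists (fun=> x0); split=> [i|]; first by rewrite inE.
  by rewrite /free_mod /spanmx big_set0 adds0mx cards0.
case: (arg_maxP wt m0S) => m mS maxm; have {}mS : m \in S by [].
have ltSmk : (#|S :\ m| < k)%N by move: ltSk; rewrite (cardsD1 m S) mS.
have [a [adm_a free_a]] := IHk _ ltSmk (free_modS (subsetDl S [set m]) freeS).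
set A := (spanmx (v \o a) (S :\ m) + B)%MS.
case: (pickP [pred x | adm m x && ~~ (v x <= A)%MS]) => [x /andP[adm_x vxA] | noext].
  pose a' (i : I) := if i == m then x else a i.
  have span_a' : spanmx (v \o a') (S :\ m) = spanmx (v \o a) (S :\ m).
    by apply: eq_bigr => i; rewrite in_setD1 /a' /= => /andP[/negPf -> _].
  have free_a' : free_mod B (v \o a') (S :\ m) by rewrite /free_mod span_a'.
  have vxA' : ~~ ((v \o a') m <= spanmx (v \o a') (S :\ m) + B)%MS.
    by rewrite span_a' /= /a' eqxx.
  exists a'; split; last by rewrite (free_modD1 _ _ mS) free_a'.
  move=> i iS; rewrite /a'; case: eqP => [->//|/eqP neq_im].
  by apply: adm_a; rewrite in_setD1 neq_im.
have: (spanmx c S + B <= A)%MS.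
  rewrite addsmx_sub addsmxSr andbT; apply/sumsmx_subP => i iS; rewrite genmxE.
  apply: submx_trans (adm_span (maxm i iS)) _.
  rewrite addsmx_sub addsmxSr andbT; apply/sumsmx_subP => x; rewrite inE => adm_x.
  by rewrite genmxE; move: (noext x); rewrite /= adm_x => /negbFE.
move/mxrankS; rewrite (eqP freeS) (cardsD1 m S) mS.
have := mxrank_spanmx_adds_le B (v \o a) (S :\ m); rewrite -/A; lia.
Qed.

End Greedy.

End FreeModulo.

Lemma spanmx_rows (F : fieldType) m n (A : 'M[F]_(m, n)) :
  (spanmx (fun i => row i A) setT :=: A)%MS.
Proof.
apply/eqmxP/andP; split; first by apply/sumsmx_subP => i _; rewrite genmxE row_sub.
by apply/row_subP => i; exact: mem_spanmx.
Qed.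

Lemma F2_natr_odd k : (k%:R : 'F_2) = (odd k)%:R.
Proof. by rewrite -Fp_nat_mod // modn2. Qed.

Lemma F2_natrD (a b : bool) : (a%:R + b%:R : 'F_2) = (a (+) b)%:R.
Proof. by rewrite -natrD F2_natr_odd oddD !oddb. Qed.

Lemma F2_natrM (a b : bool) : (a%:R * b%:R : 'F_2) = (a && b)%:R.
Proof. by rewrite -natrM mulnb. Qed.

Lemma F2_natr_neq0 (x : 'F_2) : (x != 0)%:R = x.
Proof. by case: x => [[|[|k]] //= lt_k2]; apply/val_inj. Qed.

Lemma F2_sum_natr (T : finType) (P : {pred T}) (b : pred T) :
  \sum_(i in P) ((b i)%:R : 'F_2) = (odd #|[set i in P | b i]|)%:R.
Proof.
rewrite -natr_sum F2_natr_odd -sum1_card; congr (odd _)%:R.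
rewrite big_mkcond [RHS]big_mkcond; apply: eq_bigr => i _.
by rewrite inE; case: (i \in P); case: (b i).
Qed.

Lemma F2_addmxx m n (A : 'M['F_2]_(m, n)) : A + A = 0.
Proof.
apply/matrixP => i j; rewrite !mxE -[A i j]F2_natr_neq0.
by rewrite F2_natrD addbb.
Qed.

Lemma sub_spanmx_F2P (I : finType) n (v : I -> 'rV['F_2]_n) (S : {set I}) x :
  reflect (exists2 T : {set I}, T \subset S & x = \sum_(i in T) v i)
          (x <= spanmx v S)%MS.
Proof.
apply: (iffP idP) => [|[T sTS ->]]; last first.
  exact: submx_trans (sum_sub_spanmx v T) (spanmxS v sTS).
case/sub_sumsmxP => u ->; set y := fun i => (u i *m <<v i>>)%MS.
exists [set i in S | y i != 0]; first by apply/subsetP => i; rewrite inE => /andP[].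
rewrite big_mkcond [RHS]big_mkcond; apply: eq_bigr => i _; rewrite inE.
case: (i \in S) => //=; rewrite -/(y i); have [->|nz_y] := eqVneq (y i) 0 => //.
have /sub_rVP[a Ea] : (y i <= v i)%MS.
  by apply: submx_trans (submxMl _ _) _; rewrite genmxE.
have nz_a : a != 0 by apply: contraNneq nz_y => a0; rewrite Ea a0 scale0r.
by rewrite Ea -[a]F2_natr_neq0 nz_a scale1r.
Qed.

Lemma free_mod_F2P (I : finType) p n (B : 'M['F_2]_(p, n)) (v : I -> 'rV_n)
    (S : {set I}) :
  free_mod B v S <->
  (forall T : {set I}, T \subset S -> ((\sum_(i in T) v i)%R <= B)%MS -> T = set0).
Proof.
split=> [freeS T sTS sumB | indep].
  apply/eqP/set0Pn => -[j jT].
  have := free_modS sTS freeS; rewrite (free_modD1 _ _ jT) => /andP[_ /negP]; apply.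
  have -> : v j = (\sum_(i in T) v i - \sum_(i in T :\ j) v i)%R.
    by rewrite (big_setD1 j jT) addrK.
  apply: addmx_sub; first exact: submx_trans sumB (addsmxSr _ _).
  by rewrite eqmx_opp; apply: submx_trans (sum_sub_spanmx v _) (addsmxSl _ _).
have [k] := ubnP #|S|; elim: k S indep => // k IHk S indep ltSk.
have [->|[j jS]] := set_0Vmem S.
  by rewrite /free_mod /spanmx big_set0 adds0mx cards0.
rewrite (free_modD1 _ _ jS) IHk; first last.
- by move: ltSk; rewrite (cardsD1 j S) jS.
- by move=> T sT; apply: indep; apply: subset_trans sT (subsetDl _ _).
apply/negP => /sub_addsmxP[[y b] /= Evj].
have /sub_spanmx_F2P[T sT ET] : (y *m spanmx v (S :\ j) <= spanmx v (S :\ j))%MS.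
  exact: submxMl.
have jT : j \notin T by apply/negP => /(subsetP sT); rewrite !inE eqxx.
suff : j |: T = set0 by move/setP/(_ j); rewrite !inE eqxx.
apply: indep; first by rewrite subUset sub1set jS (subset_trans sT) ?subsetDl.
rewrite big_setU1 //= Evj ET addrC addrA F2_addmxx add0r.
exact: submxMl.
Qed.

Section ChainVectors.
Variable V : finType.
Local Notation N := #|{: {set V}}|.
Implicit Types (a b c : chain V).

Definition chain_rV c : 'rV['F_2]_N := \row_i ((enum_val i \in c)%:R).

Definition rV_chain (x : 'rV['F_2]_N) : chain V := [set e | x 0 (enum_rank e) != 0].

Lemma chain_rVK : cancel chain_rV rV_chain.
Proof.
move=> c; apply/setP => e; rewrite inE mxE enum_rankK.
by case: (e \in c); rewrite ?oner_eq0.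
Qed.

Lemma rV_chainK : cancel rV_chain chain_rV.
Proof. by move=> x; apply/rowP => i; rewrite mxE inE enum_valK F2_natr_neq0. Qed.

Lemma chain_rV_inj : injective chain_rV.
Proof. exact: can_inj chain_rVK. Qed.

Lemma chain_rV_eq0 c : (chain_rV c == 0) = (c == set0).
Proof.
apply/eqP/eqP => [c0|->]; last by apply/rowP => i; rewrite !mxE inE.
by rewrite -[c]chain_rVK c0; apply/setP => e; rewrite !inE mxE eqxx.
Qed.

Lemma chain_rV_cadd a b : chain_rV (cadd a b) = chain_rV a + chain_rV b.
Proof.
apply/rowP => i; rewrite !mxE F2_natrD !inE.
by case: (enum_val i \in a); case: (enum_val i \in b).
Qed.

Lemma chain_rV_zsum (I : finType) (f : I -> chain V) (S : {set I}) :
  chain_rV (zsum f S) = \sum_(i in S) chain_rV (f i).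
Proof.
apply/rowP => j; rewrite !mxE summxE inE -F2_sum_natr.
by apply: eq_bigr => i _; rewrite mxE.
Qed.

Lemma F2_sum_enum_val (b : pred {set V}) :
  \sum_(i < N) ((b (enum_val i))%:R : 'F_2) = (odd #|[set e | b e]|)%:R.
Proof.
rewrite -(big_enum_val (fun e => (b e)%:R)) F2_sum_natr.
by congr (odd _)%:R; apply: eq_card => e; rewrite !inE.
Qed.

End ChainVectors.
Arguments chain_rV {V}.
Arguments rV_chain {V}.

Section CycleAndBoundarySpaces.
Variables (V : finType) (K : complex2 V).
Local Notation N := #|{: {set V}}|.

Definition incidence_mx : 'M['F_2]_(N, #|{: V}|) :=
  \matrix_(i, x) ((enum_val x \in (enum_val i : {set V}))%:R).

Definition nonedge_mx : 'M['F_2]_N :=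
  diag_mx (\row_i (((enum_val i : {set V}) \notin edges K)%:R)).

(* The first block tests that every vertex has even degree, the second one
   that the support consists of edges. *)
Definition cycle_mx : 'M['F_2]_N := kermx (row_mx incidence_mx nonedge_mx).

Definition bd_mx : 'M['F_2]_N :=
  \matrix_(i, j) [&& enum_val i \in tris K, enum_val j \in edges K
                   & (enum_val j : {set V}) \subset enum_val i]%:R.

Lemma mul_nonedge_mx_eq0 c : (chain_rV c *m nonedge_mx == 0) = (c \subset edges K).
Proof.
rewrite mul_mx_diag; apply/eqP/subsetP => [c0 e ec | cE].
  move/rowP: c0 => /(_ (enum_rank e)); rewrite !mxE enum_rankK F2_natrM ec /=.
  by case: (e \in edges K) => // /eqP; rewrite oner_eq0.
apply/rowP => i; rewrite !mxE F2_natrM.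
by case ci: (enum_val i \in c); rewrite ?(cE _ ci).
Qed.

Lemma mul_incidence_mx_eq0 c :
  (chain_rV c *m incidence_mx == 0) = [forall x, ~~ odd #|[set e in c | x \in e]|].
Proof.
have degE x : (chain_rV c *m incidence_mx) 0 (enum_rank x)
               = (odd #|[set e in c | x \in e]|)%:R.
  rewrite !mxE -F2_sum_enum_val; apply: eq_bigr => i _.
  by rewrite !mxE enum_rankK F2_natrM.
apply/eqP/forallP => [c0 x | even_deg].
  by move: (degE x); rewrite c0 mxE; case: odd.
apply/rowP => j; rewrite -[j]enum_valK degE mxE.
by move: (even_deg (enum_val j)); case: odd.
Qed.

Lemma is_cycleP c : reflect (is_cycle K c) (chain_rV c <= cycle_mx)%MS.
Proof.
rewrite sub_kermx mul_mx_row row_mx_eq0 mul_incidence_mx_eq0 mul_nonedge_mx_eq0.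
apply: (iffP andP) => [[/forallP even_deg cE] | [cE even_deg]]; first by split.
by split=> //; apply/forallP.
Qed.

Lemma mul_bd_mx T : chain_rV T *m bd_mx = chain_rV (bd2 K (T :&: tris K)).
Proof.
apply/rowP => j; rewrite !mxE; under eq_bigr do rewrite !mxE F2_natrM.
rewrite (F2_sum_enum_val (fun t => [&& t \in T, t \in tris K, enum_val j \in edges K
                                   & enum_val j \subset t])).
rewrite inE; congr (_%:R).
case: (enum_val j \in edges K) => /=.
  by congr (odd _); apply: eq_card => t; rewrite !inE andbA.
rewrite (_ : [set _ in T | _] = set0) ?cards0 //.
by apply/setP => t; rewrite !inE !andbF.
Qed.

Lemma is_boundaryP c : reflect (is_boundary K c) (chain_rV c <= bd_mx)%MS.
Proof.
apply: (iffP submxP) => [[u cE] | [T [sTK ->]]].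
  exists (rV_chain u :&: tris K); split; first exact: subsetIr.
  by apply: chain_rV_inj; rewrite cE -mul_bd_mx rV_chainK.
by exists (chain_rV T); rewrite mul_bd_mx (setIidPl sTK).
Qed.

End CycleAndBoundarySpaces.

Section Bases.
Variables (V : finType) (K : complex2 V).
Local Notation N := #|{: {set V}}|.
Local Notation fspan f := (spanmx (chain_rV \o f) setT).

Definition homology_basisb n (f : 'I_n -> chain V) : bool :=
  [&& [forall i, chain_rV (f i) <= cycle_mx K]%MS,
      free_mod (bd_mx K) (chain_rV \o f) setT
    & (cycle_mx K <= fspan f + bd_mx K)%MS].

Lemma free_mod_zsumP (I : finType) p (B : 'M['F_2]_(p, N)) (f : I -> chain V) :
  free_mod B (chain_rV \o f) setT <->
  (forall S, (chain_rV (zsum f S) <= B)%MS -> S = set0).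
Proof.
rewrite free_mod_F2P; split=> indep S; first by rewrite chain_rV_zsum => /indep; apply.
by move=> _; rewrite -chain_rV_zsum; apply: indep.
Qed.

Lemma spanmx_cycles (I : finType) (f : I -> chain V) S :
  (forall i, is_cycle K (f i)) -> (spanmx (chain_rV \o f) S <= cycle_mx K)%MS.
Proof. by move=> cyc; apply/sumsmx_subP => i _; rewrite genmxE; apply/is_cycleP. Qed.

Lemma homology_basisP n (f : 'I_n -> chain V) :
  reflect (homology_basis K f) (homology_basisb f).
Proof.
apply: (iffP and3P) => [[/forallP cyc free spanf] | [cyc indep spanf]]; split.
- by move=> i; apply/is_cycleP.
- by move=> S /is_boundaryP; move: S; apply/free_mod_zsumP.
- move=> z /is_cycleP /submx_trans /(_ spanf) /sub_addsmxP[[u b] /= zE].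
  have /sub_spanmx_F2P[S _ uE] := submxMl u (fspan f).
  exists S, (rV_chain (b *m bd_mx K)); split.
    by apply/is_boundaryP; rewrite rV_chainK submxMl.
  by apply: chain_rV_inj; rewrite chain_rV_cadd rV_chainK chain_rV_zsum -uE.
- by apply/forallP => i; apply/is_cycleP.
- by apply/free_mod_zsumP => S /is_boundaryP /indep.
apply/rV_subP => x; rewrite -[x]rV_chainK.
move=> /is_cycleP /spanf[S [b [/is_boundaryP bB ->]]].
rewrite chain_rV_cadd chain_rV_zsum addmx_sub_adds //.
exact: submx_trans (sum_sub_spanmx _ S) (spanmxS _ (subsetT S)).
Qed.

Lemma eq_homology_basisb n (f g : 'I_n -> chain V) :
  f =1 g -> homology_basisb f = homology_basisb g.
Proof.
move=> fg; have spanE : fspan f = fspan g by apply: eq_bigr => i _; rewrite /= fg.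
rewrite /homology_basisb /free_mod spanE; congr (_ && _).
by apply: eq_forallb => i; rewrite fg.
Qed.

Lemma homology_basis_span n (f : 'I_n -> chain V) :
  homology_basis K f -> (fspan f + bd_mx K :=: cycle_mx K + bd_mx K)%MS.
Proof.
case/homology_basisP/and3P => /forallP cyc _ spanf; apply/eqmxP/andP; split.
  by rewrite addsmxS // spanmx_cycles // => i; apply/is_cycleP.
by rewrite addsmx_sub spanf addsmxSr.
Qed.

Lemma homology_basis_rank n (f : 'I_n -> chain V) : homology_basis K f ->
  \rank (cycle_mx K + bd_mx K) = (n + \rank (bd_mx K))%N.
Proof.
move=> hb; rewrite -(homology_basis_span hb).
by case/homology_basisP/and3P: hb => _ /eqP -> _; rewrite cardsT card_ord.
Qed.

Lemma free_cycles_homology_basis n (f C : 'I_n -> chain V) :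
  homology_basis K C -> (forall i, is_cycle K (f i)) ->
  free_mod (bd_mx K) (chain_rV \o f) setT -> homology_basis K f.
Proof.
move=> hbC cyc free; apply/homology_basisP/and3P; split=> //.
  by apply/forallP => i; apply/is_cycleP.
have le_span : (fspan f + bd_mx K <= cycle_mx K + bd_mx K)%MS.
  by rewrite addsmxS // spanmx_cycles.
have /eqmxP -> : (fspan f + bd_mx K == cycle_mx K + bd_mx K)%MS.
  rewrite -(mxrank_leqif_eq le_span).2 (homology_basis_rank hbC) (eqP free).
  by rewrite cardsT card_ord.
exact: addsmxSl.
Qed.

Lemma homology_basis_exists : exists n (f : 'I_n -> chain V), homology_basis K f.
Proof.
set X := (cycle_mx K :\: bd_mx K)%MS.
exists (\rank X), (fun i => rV_chain (row i (row_base X))).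
have spanE : (fspan (fun i => rV_chain (row i (row_base X))) :=: X)%MS.
  apply: eqmx_trans (eq_row_base X); apply: eqmx_trans (spanmx_rows _).
  by rewrite /spanmx; under eq_bigr do rewrite /= rV_chainK; apply: eqmx_refl.
apply/homology_basisP/and3P; split.
- apply/forallP => i; rewrite rV_chainK (submx_trans (row_sub i _)) //.
  by rewrite eq_row_base diffmxSl.
- rewrite /free_mod (adds_eqmx spanE (eqmx_refl _)) cardsT card_ord.
  by rewrite -mxrank_sum_cap capmx_diff mxrank0 addn0.
rewrite (adds_eqmx spanE (eqmx_refl _)).
by rewrite -{1}(addsmx_diff_cap_eq (cycle_mx K) (bd_mx K)) addsmxS ?capmxSr.
Qed.

Lemma cycle_basis_eqspan n (f f' : 'I_n -> chain V) :
  cycle_basis K f -> (forall i, is_cycle K (f' i)) -> (fspan f' :=: fspan f)%MS ->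
  cycle_basis K f'.
Proof.
case=> _ indep spanf cyc' eqf; split=> //.
  have : free_mod (0 : 'M_N) (chain_rV \o f) setT.
    by apply/free_mod_zsumP => S; rewrite submx0 chain_rV_eq0 => /eqP /indep.
  rewrite /free_mod -(adds_eqmx eqf (eqmx_refl 0)) => /free_mod_zsumP indep' S zS0.
  by apply: indep'; rewrite submx0 chain_rV_eq0 zS0.
move=> z /spanf[S ->].
have : (chain_rV (zsum f S) <= fspan f')%MS.
  rewrite eqf chain_rV_zsum.
  exact: submx_trans (sum_sub_spanmx _ S) (spanmxS _ (subsetT S)).
case/sub_spanmx_F2P => T _ zE; exists T.
by apply: chain_rV_inj; rewrite zE chain_rV_zsum.
Qed.

Variables (R : realFieldType) (w : {set V} -> R).

Lemma min_homology_basis_exists :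
  exists n (C : 'I_n -> chain V), min_homology_basis K w C.
Proof.
have [n [f0 hb0]] := homology_basis_exists.
have hb0' : homology_basisb (finfun f0).
  by rewrite (eq_homology_basisb (ffunE f0)); apply/homology_basisP.
case: (arg_minP (P := fun C : {ffun 'I_n -> chain V} => homology_basisb C)
                (fun C => total_size w C) hb0') => C /homology_basisP hbC minC.
exists n, C; split=> // m f hbf.
have Emn : m = n.
  apply/eqP; rewrite -(eqn_add2r (\rank (bd_mx K))).
  by rewrite -(homology_basis_rank hbf) (homology_basis_rank hbC).
subst m; have hbf' : homology_basisb (finfun f).
  by rewrite (eq_homology_basisb (ffunE f)); apply/homology_basisP.
by apply: le_trans (minC _ hbf') _; rewrite /total_size; under eq_bigr do rewrite ffunE.
Qed.

Lemma min_cycle_basis_exchange L (G : 'I_L -> chain V) z S j :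
  min_cycle_basis K w G -> is_cycle K z -> z = zsum G S -> j \in S ->
  csize w (G j) <= csize w z.
Proof.
move=> [basG minG] cyc_z zE jS; pose G' i := if i == j then z else G i.
have basG' : cycle_basis K G'.
  apply: (cycle_basis_eqspan basG) => [i|].
    by rewrite /G'; case: eqP => // _; case: basG => cycG _ _.
  apply: eqmx_trans (spanmx_exchange (chain_rV \o G) jS).
  apply: eqmx_sums => i _; rewrite /= /G'; case: eqP => // _.
  by rewrite zE chain_rV_zsum.
have sumE : \sum_(i < L | i != j) csize w (G' i) = \sum_(i < L | i != j) csize w (G i).
  by apply: eq_bigr => i /negPf neq_ij; rewrite /G' neq_ij.
have := minG _ _ basG'; rewrite /total_size (bigD1 j) //= [X in _ <= X](bigD1 j) //=.
by rewrite sumE /G' eqxx lerD2r.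
Qed.

Lemma min_cycle_basis_span L (G : 'I_L -> chain V) z :
  min_cycle_basis K w G -> is_cycle K z ->
  (chain_rV z <= spanmx (chain_rV \o G) [set j | (csize w (G j) <= csize w z)%R])%MS.
Proof.
move=> minG cyc_z; have [[_ _ spanG] _] := minG; have [S zE] := spanG z cyc_z.
have sSG : S \subset [set j | csize w (G j) <= csize w z].
  by apply/subsetP => j jS; rewrite inE (min_cycle_basis_exchange minG cyc_z zE jS).
rewrite {1}zE chain_rV_zsum.
exact: submx_trans (sum_sub_spanmx _ S) (spanmxS _ sSG).
Qed.

End Bases.

Theorem lemma1 (R : realFieldType) (V : finType) (K : complex2 V)
  (w : {set V} -> R)
  (hw : forall e, e \in edges K -> 0 <= w e)
  (G' : {set chain V})
  (hG' : forall c, c \in G' -> is_cycle K c)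
  (hGamma : exists (L : nat) (Gs : 'I_L -> chain V),
     min_cycle_basis K w Gs /\
     forall i : 'I_L, exists Gi : {set chain V},
       [/\ Gi \subset G', Gs i = zsumset Gi &
           forall c, c \in Gi -> csize w c <= 2 * csize w (Gs i)]) :
  exists (g : nat) (C : 'I_g -> chain V),
    min_homology_basis K w C /\
    exists A : 'I_g -> chain V,
      [/\ forall i, A i \in G',
          homology_basis K A &
          forall i, csize w (A i) <= 2 * csize w (C i)].
Proof.
case: hGamma => L [Gs [minGs decGs]].
have [g [C [hbC minC]]] := min_homology_basis_exists K w.
exists g, C; split=> //.
pose adm i x := (x \in G') && (csize w x <= 2 * csize w (C i)).
have Gs_span l : (chain_rV (Gs l) <=
    spanmx chain_rV [set x | (x \in G') && (csize w x <= 2 * csize w (Gs l))%R])%MS.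
  have [Gi [sGi GlE Gi_small]] := decGs l.
  rewrite {1}GlE (_ : zsumset Gi = zsum id Gi) // chain_rV_zsum.
  apply: submx_trans (sum_sub_spanmx _ Gi) (spanmxS _ _).
  by apply/subsetP => x xGi; rewrite inE (subsetP sGi) ?Gi_small.
have [cycC _ _] := hbC; have /homology_basisP/and3P[_ freeC _] := hbC.
have adm_span i j : (csize w (C i) <= csize w (C j))%O ->
    (chain_rV (C i) <= spanmx chain_rV [set x | adm j x] + bd_mx K)%MS.
  move=> le_ij; apply: submx_trans (addsmxSl _ (bd_mx K)).
  apply: submx_trans (min_cycle_basis_span minGs (cycC i)) _.
  apply/sumsmx_subP => l; rewrite inE => le_l; rewrite genmxE.
  apply: submx_trans (Gs_span l) (spanmxS _ _); apply/subsetP => x; rewrite !inE.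
  case/andP => xG le_x; rewrite /adm xG; apply: le_trans le_x _.
  by rewrite ler_pM2l ?ltr0n // (le_trans le_l le_ij).
have [A [admA freeA]] := greedy_free_mod set0 adm_span freeC.
exists A; split=> [i | | i]; try by case/andP: (admA i (in_setT i)).
apply: free_cycles_homology_basis hbC _ freeA => i.
by apply: hG'; case/andP: (admA i (in_setT i)).
Qed.
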